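(* Let $P_\sigma:=\{(S_1,S_2)\in\mathbb{R}^2:S_1+S_2\le1\}$, $I:=1-S_1-S_2$, $\mathcal{P}:=\{(X,I):I\ge0\}$, $\mathcal{B}:=\{(\beta_1,\beta_2)\in\mathbb{R}^2:\beta_1>\beta_2\}$ and $G_\sigma:=\{g\in GL_2(\mathbb{R}):\det g>0,\ g_{11}+g_{21}=g_{12}+g_{22}=1\}$. For $\beta\in\mathcal{B}$ let $\varphi_\beta(S)=(\beta_1S_1+\beta_2S_2,1-S_1-S_2)$. An SSISS vector field with transmission pair $\beta\in\mathcal{B}$ is a vector field on $P_\sigma$ of the form $$F(S)=\big(-\beta_1S_1I-\Omega_1(S)S_1+\Omega_2(S)S_2+\gamma_1I,\ -\beta_2S_2I+\Omega_1(S)S_1-\Omega_2(S)S_2+\gamma_2I\big)$$ with $\Omega_1,\Omega_2\in C^\infty(P_\sigma)$ and $\gamma_1+\gamma_2=1$ (the pair $\beta$ is determined by $F$). Then: (i) If $F$ is an SSISS vector field with pair $\beta$ and $(\varphi_\beta)_*F=f\partial_X+(X-1)I\partial_I$ for some $f\in C^\infty(\mathcal{P})$, then for every $g\in G_\sigma$ the vector field $g_*F$ is an SSISS vector field with pair $\beta g^{-1}$ and $(\varphi_{\beta g^{-1}})_*(g_*F)=f\partial_X+(X-1)I\partial_I$. (ii) If $F$, $F'$ are SSISS vector fields with pairs $\beta,\beta'$ respectively and $(\varphi_\beta)_*F=(\varphi_{\beta'})_*F'=f\partial_X+(X-1)I\partial_I$ for the same $f$, then there exists a unique $g\in G_\sigma$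 with $\beta'=\beta g^{-1}$ and $F'=g_*F$.
   Context: Here $g\in G_\sigma$ acts linearly on column vectors $S=(S_1,S_2)^T$ (and preserves $P_\sigma$), $\beta$ is a row vector, and $g_*F:=g\circ F\circ g^{-1}$ is the push-forward; similarly $(\varphi_\beta)_*F=D\varphi_\beta\circ F\circ\varphi_\beta^{-1}$. *)

From HB Require Import structures.
From mathcomp Require Import all_boot all_order all_algebra.
From mathcomp Require Import all_classical all_reals all_analysis.
Set Implicit Arguments. Unset Strict Implicit. Unset Printing Implicit Defensive.
Import Order.TTheory GRing.Theory Num.Theory.
Import numFieldNormedType.Exports.
Local Open Scope classical_set_scope.
Local Open Scope ring_scope.

Section SSISS.
Context {R : realType}.

(* Points of R^2 are column vectors S = (S_1, S_2)^T : 'cV[R]_2,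
   entry S_1 = S 0 0, S_2 = S 1 0 (0-based ordinals). *)
Notation V := 'cV[R]_2.

Definition cv2 (a b : R) : V := \col_(i < 2) (if i == 0 then a else b).

Fixpoint iterD (vs : seq V) (h : V -> R) : V -> R :=
  if vs is v :: vs' then (fun x => 'D_v (iterD vs' h) x) else h.

Definition smooth (h : V -> R) : Prop :=
  forall (vs : seq V) (x : V), differentiable (iterD vs h) x.

Definition smooth_on (D : set V) (h : V -> R) : Prop :=
  exists h' : V -> R, smooth h' /\ (forall x, D x -> h x = h' x).

Definition Psigma : set V := [set S | S 0 0 + S 1 0 <= 1].
Definition Ivar (S : V) : R := 1 - S 0 0 - S 1 0.
(* calP = {(X, I) : I >= 0}, coordinates Y = (X, I)^T *)
Definition calP : set V := [set Y | 0 <= Y 1 0].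
Definition calB : set 'rV[R]_2 := [set b | b 0 1 < b 0 0].
Definition Gsigma : set 'M[R]_2 :=
  [set g | 0 < \det g /\ g 0 0 + g 1 0 = 1 /\ g 0 1 + g 1 1 = 1].

Definition pushforward (phi phiinv : V -> V) (Dphi : V -> 'M[R]_2)
  (F : V -> V) : V -> V :=
  fun y => Dphi (phiinv y) *m F (phiinv y).

Definition push_g (g : 'M[R]_2) (F : V -> V) : V -> V :=
  pushforward (fun S => g *m S) (fun S => invmx g *m S) (fun _ => g) F.

(* phi_beta(S) = (beta_1 S_1 + beta_2 S_2, 1 - S_1 - S_2) = A_beta S + (0,1) *)
Definition Abeta (b : 'rV[R]_2) : 'M[R]_2 :=
  \matrix_(i < 2, j < 2) (if i == 0 then b 0 j else -1).
Definition phi (b : 'rV[R]_2) (S : V) : V :=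
  cv2 (b 0 0 * S 0 0 + b 0 1 * S 1 0) (1 - S 0 0 - S 1 0).
Definition phi_inv (b : 'rV[R]_2) (Y : V) : V :=
  invmx (Abeta b) *m (Y - cv2 0 1).
Definition push_phi (b : 'rV[R]_2) (F : V -> V) : V -> V :=
  pushforward (phi b) (phi_inv b) (fun _ => Abeta b) F.

Definition model_field (f : V -> R) : V -> V :=
  fun Y => cv2 (f Y) ((Y 0 0 - 1) * Y 1 0).

Definition SSISS (b : 'rV[R]_2) (F : V -> V) : Prop :=
  calB b /\
  exists (Om1 Om2 : V -> R) (g1 g2 : R),
    smooth_on Psigma Om1 /\ smooth_on Psigma Om2 /\ g1 + g2 = 1 /\
    forall S, Psigma S ->
      F S = cv2 (- b 0 0 * S 0 0 * Ivar S - Om1 S * S 0 0 + Om2 S * S 1 0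
                   + g1 * Ivar S)
                (- b 0 1 * S 1 0 * Ivar S + Om1 S * S 0 0 - Om2 S * S 1 0
                   + g2 * Ivar S).

End SSISS.

From Pilot Require Import Defs.
From HB Require Import structures.
From mathcomp Require Import all_boot all_order all_algebra.
From mathcomp Require Import all_classical all_reals all_analysis.
From mathcomp Require Import ring.
Import Order.TTheory GRing.Theory Num.Theory.
Import numFieldNormedType.Exports.
Local Open Scope ring_scope.

(* G_sigma is the group of matrices of positive determinant fixing the row vector
   [ones = (1, 1)], and phi_beta is affine with linear part [Abeta beta], whose rows
   are beta and -ones.  Hence [Abeta beta *m g^-1 = Abeta (beta *m g^-1)] for g in
   G_sigma, which gives (phi_(beta g^-1))_* (g_* F) = (phi_beta)_* F.  Conversely, if
   two pairs give the same push-forward, then g = (Abeta beta')^-1 (Abeta beta) is the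
   only candidate, and it lies in G_sigma because both matrices have second row -ones
   and negative determinant beta_2 - beta_1. *)

Lemma ord2P (j : 'I_2) : j = 0 \/ j = 1.
Proof. by case: j => [[|[|k]]] hk; [left; apply: val_inj|right; apply: val_inj|]. Qed.

Lemma sum_ord2 (V : nmodType) (F : 'I_2 -> V) : \sum_(i < 2) F i = F 0 + F 1.
Proof. by rewrite big_ord_recl big_ord1; congr (F _ + F _); apply: val_inj. Qed.

Section Smooth.
Context {R : realType}.
Notation V := 'cV[R]_2.
Local Notation iterD := Defs.iterD.

Lemma derive_additive_homogeneous (U : normedModType R) (f : U -> R) (v x : U) :
  (forall (h : R) (u y : U), f (h *: u + y) = h * f u + f y) ->
  'D_v f x = f v.
Proof.
move=> hf; rewrite /derive; apply: lim_near_cst => //.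
near=> h.
have h0 : h != 0 by near: h; exact: nbhs_dnbhs_neq.
by rewrite /= hf addrK /GRing.scale /= mulrA mulVf // mul1r.
Unshelve. all: by end_near.
Qed.

Lemma derive_comp_mulmx m n (M : 'M[R]_(m, n)) (k : 'cV[R]_m -> R) (v x : 'cV[R]_n) :
  'D_v (k \o mulmx M) x = 'D_(M *m v) k (M *m x).
Proof.
rewrite /derive /=; do 2!f_equal; apply: funext => h /=.
by rewrite mulmxDr scalemxAr.
Qed.

Lemma differentiable_mulmx (M : 'M[R]_2) (x : V) : differentiable (mulmx M) x.
Proof.
have -> : mulmx M = (fun y : V => y 0 0 *: col 0 M) + (fun y : V => y 1 0 *: col 1 M).
  apply: funext => y; apply/matrixP => i j.
  by rewrite !mxE sum_ord2 (ord1 j); ring.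
by apply: differentiableD; apply: differentiableZl; exact: differentiable_coord.
Qed.

Lemma smoothD (f g : V -> R) : smooth f -> smooth g -> smooth (fun x => f x + g x).
Proof.
move=> sf sg.
have iterDD vs : iterD vs (fun x => f x + g x) = (fun x => iterD vs f x + iterD vs g x).
  elim: vs => [|v vs IH] //=; apply: funext => x.
  by rewrite IH deriveD //; exact: diff_derivable.
by move=> vs x; rewrite iterDD; exact: differentiableD.
Qed.

Lemma smoothZ (k : R) (f : V -> R) : smooth f -> smooth (fun x => k * f x).
Proof.
move=> sf.
have iterDZ vs : iterD vs (fun x => k * f x) = (fun x => k * iterD vs f x).
  elim: vs => [|v vs IH] //=; apply: funext => x.
  by rewrite IH deriveZ //; exact: diff_derivable.
by move=> vs x; rewrite iterDZ; exact: differentiableZ.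
Qed.

Lemma smooth_cst (c : R) : smooth (cst c).
Proof.
have iterD_cst vs : iterD vs (cst c) = cst (if vs is [::] then c else 0).
  by elim: vs => [|v vs IH] //=; apply: funext => x; rewrite IH derive_cst.
by move=> vs x; rewrite iterD_cst; exact: differentiable_cst.
Qed.

Lemma smooth_coord (i : 'I_2) : smooth (fun x : V => x i 0).
Proof.
pose c := fun x : V => x i 0.
have c_lin (h : R) (u y : V) : c (h *: u + y) = h * c u + c y by rewrite /c !mxE.
have iterD_c vs : iterD vs c = c \/ exists a, iterD vs c = cst a.
  elim: vs => [|v vs IH] /=; first by left.
  right; case: IH => [->|[a ->]].
    by exists (c v); apply: funext => x; rewrite derive_additive_homogeneous.
  by exists 0; apply: funext => x; rewrite derive_cst.
move=> vs x; case: (iterD_c vs) => [->|[a ->]]; last exact: differentiable_cst.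
exact: differentiable_coord.
Qed.

Lemma smooth_comp_mulmx (M : 'M[R]_2) (f : V -> R) :
  smooth f -> smooth (fun x => f (M *m x)).
Proof.
move=> sf.
have iterD_comp vs : iterD vs (f \o mulmx M) = iterD (map (mulmx M) vs) f \o mulmx M.
  by elim: vs => [|v vs IH] //=; apply: funext => x; rewrite IH derive_comp_mulmx.
move=> vs x; rewrite -[fun x => _]/(f \o mulmx M) iterD_comp.
exact: differentiable_comp (differentiable_mulmx M x) (sf _ _).
Qed.

Lemma smooth_Ivar : smooth (@Ivar R).
Proof.
have -> : @Ivar R = (fun S => (1 + -1 * S 0 0) + -1 * S 1 0).
  by apply: funext => S; rewrite /Ivar; ring.
by apply: smoothD; [apply: smoothD; [exact: smooth_cst|]|]; apply/smoothZ/smooth_coord.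
Qed.

End Smooth.

Section LinearAlgebra.
Context {R : realType}.
Notation V := 'cV[R]_2.

Lemma det_mx22 (A : 'M[R]_2) : \det A = A 0 0 * A 1 1 - A 0 1 * A 1 0.
Proof.
rewrite (expand_det_row _ 0) !sum_ord2 /cofactor !det_mx11 !mxE /=.
have -> : lift (0 : 'I_2) (0 : 'I_1) = 1 by apply: val_inj.
have -> : lift (1 : 'I_2) (0 : 'I_1) = 0 by apply: val_inj.
by rewrite expr0 expr1 !mul1r mulN1r mulrN.
Qed.

Lemma invmx_mul (A B : 'M[R]_2) : A \in unitmx -> B \in unitmx ->
  invmx (A *m B) = invmx B *m invmx A.
Proof.
move=> uA uB; have uAB : A *m B \in unitmx by rewrite unitmx_mul uA.
have E : (A *m B) *m (invmx B *m invmx A) = 1%:M.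
  by rewrite mulmxA -(mulmxA A) mulmxV // mulmx1 mulmxV.
by rewrite -[RHS](mulKmx uAB) E mulmx1.
Qed.

Definition ones : 'rV[R]_2 := const_mx 1.

Lemma ones_mulmxP (M : 'M[R]_2) :
  ones *m M = ones <-> forall j, M 0 j + M 1 j = 1.
Proof.
have onesM j : (ones *m M) 0 j = M 0 j + M 1 j by rewrite !mxE sum_ord2 !mxE !mul1r.
split=> [/matrixP E j|E]; first by rewrite -onesM E mxE.
by apply/matrixP => i j; rewrite (ord1 i) onesM E mxE.
Qed.

Lemma ones_mulmx_invmx (M : 'M[R]_2) : M \in unitmx ->
  ones *m M = ones -> ones *m invmx M = ones.
Proof. by move=> uM E; rewrite -{1}E mulmxK. Qed.

Lemma GsigmaE (g : 'M[R]_2) : Gsigma g <-> 0 < \det g /\ ones *m g = ones.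
Proof.
rewrite ones_mulmxP; split=> [[dg [c0 c1]]|[dg c]]; last by split; [|split; apply: c].
by split=> // j; case: (ord2P j) => ->.
Qed.

Lemma Gsigma_ones {g : 'M[R]_2} : Gsigma g -> ones *m g = ones.
Proof. by case/GsigmaE. Qed.

Lemma Gsigma_unit {g : 'M[R]_2} : Gsigma g -> g \in unitmx.
Proof. by move=> [dg _]; rewrite unitmxE unitfE gt_eqF. Qed.

Lemma Gsigma_invmx {g : 'M[R]_2} : Gsigma g -> Gsigma (invmx g).
Proof.
move=> Gg; have gu := Gsigma_unit Gg; move: Gg => /GsigmaE[dg og].
by apply/GsigmaE; rewrite det_inv invr_gt0 ones_mulmx_invmx.
Qed.

Lemma Ivar_ones (S : V) : Ivar S = 1 - (ones *m S) 0 0.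
Proof. by rewrite /Ivar !mxE sum_ord2 !mxE !mul1r opprD addrA. Qed.

Lemma Ivar_mulmx (M : 'M[R]_2) (S : V) : ones *m M = ones -> Ivar (M *m S) = Ivar S.
Proof. by move=> oM; rewrite !Ivar_ones mulmxA oM. Qed.

Lemma PsigmaE (S : V) : Psigma S <-> 0 <= Ivar S.
Proof. by rewrite /Psigma /Ivar /= -addrA -opprD subr_ge0. Qed.

Lemma Psigma_mulmx (M : 'M[R]_2) (S : V) :
  ones *m M = ones -> Psigma S -> Psigma (M *m S).
Proof. by move=> oM /PsigmaE; rewrite -(Ivar_mulmx M S oM) => /PsigmaE. Qed.

Lemma ones_mulmx_entries (M : 'M[R]_2) :
  ones *m M = ones -> M 1 0 = 1 - M 0 0 /\ M 1 1 = 1 - M 0 1.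
Proof.
by move=> /ones_mulmxP oM; split; [rewrite -(oM 0) | rewrite -(oM 1)]; rewrite addrC addKr.
Qed.

Lemma det_ones_mulmx (g : 'M[R]_2) : ones *m g = ones -> \det g = g 0 0 - g 0 1.
Proof.
by rewrite det_mx22 => /ones_mulmx_entries[-> ->]; move: (g 0 0) (g 0 1) => x y; ring.
Qed.

Lemma calB_mulmx (b : 'rV[R]_2) (g : 'M[R]_2) :
  0 < \det g -> ones *m g = ones -> calB b -> calB (b *m g).
Proof.
move=> dg og; rewrite /calB /mkset -subr_gt0 => Bb; rewrite -subr_gt0.
have -> : (b *m g) 0 0 - (b *m g) 0 1 = (b 0 0 - b 0 1) * \det g.
  rewrite det_ones_mulmx // !mxE !sum_ord2; case: (ones_mulmx_entries _ og) => -> ->.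
  by move: (b 0 0) (b 0 1) (g 0 0) (g 0 1) => p q x y; ring.
exact: mulr_gt0.
Qed.

End LinearAlgebra.

Section Coordinates.
Context {R : realType}.
Notation V := 'cV[R]_2.

Lemma row0_Abeta (b : 'rV[R]_2) : row 0 (Abeta b) = b.
Proof. by apply/rowP => j; rewrite !mxE. Qed.

Lemma row1_Abeta (b : 'rV[R]_2) : row 1 (Abeta b) = - ones.
Proof. by apply/rowP => j; rewrite !mxE. Qed.

Lemma Abeta_inj : injective (@Abeta R).
Proof. by move=> b b' /(congr1 (row 0)); rewrite !row0_Abeta. Qed.

Lemma Abeta_mulmx (b : 'rV[R]_2) (M : 'M[R]_2) :
  ones *m M = ones -> Abeta b *m M = Abeta (b *m M).
Proof.
move=> oM; apply/row_matrixP => i; rewrite row_mul.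
by case: (ord2P i) => ->; rewrite ?row0_Abeta ?row1_Abeta ?mulNmx ?oM.
Qed.

Lemma det_Abeta (b : 'rV[R]_2) : \det (Abeta b) = b 0 1 - b 0 0.
Proof. by rewrite det_mx22 !mxE /=; move: (b 0 0) (b 0 1) => p q; ring. Qed.

Lemma Abeta_unit {b : 'rV[R]_2} : calB b -> Abeta b \in unitmx.
Proof. by move=> Bb; rewrite unitmxE unitfE det_Abeta subr_eq0 (lt_eqF Bb). Qed.

Lemma phiE (b : 'rV[R]_2) (S : V) : phi b S = Abeta b *m S + cv2 0 1.
Proof.
apply/matrixP => i j; rewrite (ord1 j).
case: (ord2P i) => ->; rewrite !mxE !sum_ord2 !mxE /=; first by rewrite addr0.
by move: (S 0 0) (S 1 0) => x y; ring.
Qed.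

Lemma phi_inv_phi (b b' : 'rV[R]_2) (S : V) :
  phi_inv b (phi b' S) = invmx (Abeta b) *m Abeta b' *m S.
Proof. by rewrite /phi_inv phiE addrK mulmxA. Qed.

Lemma push_phi_phi (b b' : 'rV[R]_2) (F : V -> V) (S : V) :
  push_phi b F (phi b' S) = Abeta b *m F (invmx (Abeta b) *m Abeta b' *m S).
Proof. by rewrite /push_phi /Defs.pushforward phi_inv_phi. Qed.

Lemma calP_phi (b : 'rV[R]_2) (S : V) : Psigma S -> calP (phi b S).
Proof. by move=> /PsigmaE; rewrite /calP /mkset /phi /cv2 mxE. Qed.

End Coordinates.

Section Equivalence.
Context {R : realType}.
Notation V := 'cV[R]_2.

Lemma push_phi_push_g (b : 'rV[R]_2) (g : 'M[R]_2) (F : V -> V) :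
  calB b -> Gsigma g -> push_phi (b *m invmx g) (push_g g F) = push_phi b F.
Proof.
move=> Bb Gg; have gu := Gsigma_unit Gg; have Au := Abeta_unit Bb.
have oh := Gsigma_ones (Gsigma_invmx Gg).
apply: funext => Y; rewrite /push_phi /push_g /Defs.pushforward /phi_inv.
rewrite -(Abeta_mulmx b _ oh) invmx_mul ?unitmx_inv // invmxK.
by rewrite !mulmxA mulVmx // mul1mx -(mulmxA (Abeta b)) mulVmx // mulmx1.
Qed.

Definition pair_transition (b b' : 'rV[R]_2) : 'M[R]_2 := invmx (Abeta b') *m Abeta b.

Lemma Gsigma_pair_transition {b b' : 'rV[R]_2} :
  calB b -> calB b' -> Gsigma (pair_transition b b').
Proof.
move=> Bb Bb'; apply/GsigmaE; split.
  rewrite det_mulmx det_inv !det_Abeta -mulrNN -invrN !opprB.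
  by apply: mulr_gt0; rewrite ?invr_gt0 subr_gt0.
have : Abeta b' *m pair_transition b b' = Abeta b by rewrite mulKVmx // Abeta_unit.
by move=> /(congr1 (row 1)); rewrite row_mul !row1_Abeta mulNmx => /oppr_inj.
Qed.

Lemma invmx_pair_transition (b b' : 'rV[R]_2) : calB b -> calB b' ->
  invmx (pair_transition b b') = invmx (Abeta b) *m Abeta b'.
Proof.
by move=> Bb Bb'; rewrite invmx_mul ?unitmx_inv ?Abeta_unit // invmxK.
Qed.

Lemma pair_transitionK (b b' : 'rV[R]_2) :
  calB b -> calB b' -> b *m invmx (pair_transition b b') = b'.
Proof.
move=> Bb Bb'; have oh := Gsigma_ones (Gsigma_invmx (Gsigma_pair_transition Bb Bb')).
apply: Abeta_inj; rewrite -(Abeta_mulmx _ _ oh) invmx_pair_transition //.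
by rewrite mulmxA mulmxV ?mul1mx // Abeta_unit.
Qed.

Lemma pair_transition_unique (b b' : 'rV[R]_2) (g : 'M[R]_2) :
  calB b -> Gsigma g -> b' = b *m invmx g -> g = pair_transition b b'.
Proof.
move=> Bb Gg ->; have gu := Gsigma_unit Gg.
have oh := Gsigma_ones (Gsigma_invmx Gg).
rewrite /pair_transition -(Abeta_mulmx _ _ oh) invmx_mul ?unitmx_inv ?Abeta_unit //.
by rewrite invmxK mulmxKV // Abeta_unit.
Qed.

Lemma push_g_pair_transition (b b' : 'rV[R]_2) (F F' : V -> V) :
  calB b -> calB b' ->
  (forall Y, calP Y -> push_phi b' F' Y = push_phi b F Y) ->
  forall S, Psigma S -> F' S = push_g (pair_transition b b') F S.
Proof.
move=> Bb Bb' E S PS; have Au' := Abeta_unit Bb'.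
have := E _ (calP_phi b' S PS); rewrite !push_phi_phi mulVmx // mul1mx => EF.
rewrite /push_g /Defs.pushforward invmx_pair_transition //.
by rewrite /pair_transition -[invmx _ *m Abeta b *m _]mulmxA -EF mulKmx.
Qed.

End Equivalence.

Section Transport.
Context {R : realType}.
Notation V := 'cV[R]_2.

Definition ssiss_field (b : 'rV[R]_2) (Om1 Om2 : V -> R) (g1 g2 : R) (S : V) : V :=
  cv2 (- b 0 0 * S 0 0 * Ivar S - Om1 S * S 0 0 + Om2 S * S 1 0 + g1 * Ivar S)
      (- b 0 1 * S 1 0 * Ivar S + Om1 S * S 0 0 - Om2 S * S 1 0 + g2 * Ivar S).

Definition pulled_rate (M : 'M[R]_2) (a1 a2 c : R) (Om1 Om2 : V -> R) : V -> R :=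
  fun S => a1 * Om1 (M *m S) + a2 * Om2 (M *m S) + c * Ivar S.

Definition diag_defect (g h : 'M[R]_2) (b : 'rV[R]_2) : 'M[R]_2 :=
  g *m diag_mx b *m h - diag_mx (b *m h).

(* g fixes [ones], hence [Ivar], and scales [ker ones = R (1, -1)] by [g00 - g01];
   [ones *m diag_defect g h b = 0], so the defect also lives in [ker ones], and all
   these contributions are absorbed into the new rates. *)
Lemma mulmx_ssiss_field (g h : 'M[R]_2) (b : 'rV[R]_2) (Om1 Om2 : V -> R)
    (g1 g2 : R) (S : V) :
  ones *m g = ones -> ones *m h = ones ->
  g *m ssiss_field b Om1 Om2 g1 g2 (h *m S) =
  ssiss_field (b *m h)
    (pulled_rate h ((g 0 0 - g 0 1) * h 0 0) (- ((g 0 0 - g 0 1) * h 1 0))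
       (diag_defect g h b 0 0) Om1 Om2)
    (pulled_rate h (- ((g 0 0 - g 0 1) * h 0 1)) ((g 0 0 - g 0 1) * h 1 1)
       (- diag_defect g h b 0 1) Om1 Om2)
    (g 0 0 * g1 + g 0 1 * g2) (g 1 0 * g1 + g 1 1 * g2) S.
Proof.
move=> og oh; have [g10 g11] := ones_mulmx_entries _ og.
have [h10 h11] := ones_mulmx_entries _ oh.
rewrite /ssiss_field /pulled_rate Ivar_mulmx //.
apply/matrixP => i j; rewrite (ord1 j).
(* Abstracting the entries first keeps [ring] from comparing ordinal indices by
   conversion, which is very slow. *)
case: (ord2P i) => ->; rewrite !(mxE, sum_ord2) /= ?mulr1n ?mulr0n ?g10 ?g11 ?h10 ?h11;
  move: (Om1 _) (Om2 _) (Ivar S) (S 0 0) (S 1 0) (g 0 0) (g 0 1) (h 0 0) (h 0 1)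
    (b 0 0) (b 0 1) => *; ring.
Qed.

Lemma smooth_on_pulled_rate (M : 'M[R]_2) (a1 a2 c : R) (Om1 Om2 : V -> R) :
  ones *m M = ones -> smooth_on Psigma Om1 -> smooth_on Psigma Om2 ->
  smooth_on Psigma (pulled_rate M a1 a2 c Om1 Om2).
Proof.
move=> oM [e1 [se1 E1]] [e2 [se2 E2]]; exists (pulled_rate M a1 a2 c e1 e2); split.
  by apply: smoothD; [apply: smoothD|]; apply: smoothZ;
    [exact: smooth_comp_mulmx|exact: smooth_comp_mulmx|exact: smooth_Ivar].
by move=> S PS; rewrite /pulled_rate E1 ?E2 //; exact: Psigma_mulmx.
Qed.

Lemma SSISS_push_g (b : 'rV[R]_2) (F : V -> V) (g : 'M[R]_2) :
  SSISS b F -> Gsigma g -> SSISS (b *m invmx g) (push_g g F).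
Proof.
move=> [Bb [Om1 [Om2 [g1 [g2 [sm1 [sm2 [g12 hF]]]]]]]] Gg.
have Gh := Gsigma_invmx Gg; set h := invmx g in Gh *.
have og := Gsigma_ones Gg; have oh := Gsigma_ones Gh.
split; first by case: Gh => dh _; exact: calB_mulmx.
exists (pulled_rate h ((g 0 0 - g 0 1) * h 0 0) (- ((g 0 0 - g 0 1) * h 1 0))
         (diag_defect g h b 0 0) Om1 Om2),
  (pulled_rate h (- ((g 0 0 - g 0 1) * h 0 1)) ((g 0 0 - g 0 1) * h 1 1)
         (- diag_defect g h b 0 1) Om1 Om2),
  (g 0 0 * g1 + g 0 1 * g2), (g 1 0 * g1 + g 1 1 * g2).
split; [exact: smooth_on_pulled_rate|split; [exact: smooth_on_pulled_rate|split]].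
  by move/ones_mulmxP: og => og; rewrite addrACA -!mulrDl !og !mul1r.
move=> S PS; rewrite /push_g /Defs.pushforward hF; last exact: Psigma_mulmx.
exact: mulmx_ssiss_field.
Qed.

End Transport.

Theorem corollary3p10 (R : realType) :
  (* (i) *)
  (forall (b : 'rV[R]_2) (F : 'cV[R]_2 -> 'cV[R]_2) (f : 'cV[R]_2 -> R),
     SSISS b F -> smooth_on calP f ->
     (forall Y, calP Y -> push_phi b F Y = model_field f Y) ->
     forall g : 'M[R]_2, Gsigma g ->
       SSISS (b *m invmx g) (push_g g F) /\
       (forall Y, calP Y ->
          push_phi (b *m invmx g) (push_g g F) Y = model_field f Y)) /\
  (* (ii) *)
  (forall (b b' : 'rV[R]_2) (F F' : 'cV[R]_2 -> 'cV[R]_2) (f : 'cV[R]_2 -> R),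
     SSISS b F -> SSISS b' F' -> smooth_on calP f ->
     (forall Y, calP Y -> push_phi b F Y = model_field f Y) ->
     (forall Y, calP Y -> push_phi b' F' Y = model_field f Y) ->
     exists g : 'M[R]_2,
       (Gsigma g /\ b' = b *m invmx g /\
        (forall S, Psigma S -> F' S = push_g g F S)) /\
       (forall g' : 'M[R]_2,
          Gsigma g' /\ b' = b *m invmx g' /\
          (forall S, Psigma S -> F' S = push_g g' F S) -> g' = g)).
Proof.
split.
- move=> b F f hF _ hY g Gg; split; first exact: SSISS_push_g.
  by move=> Y PY; rewrite push_phi_push_g ?hY //; case: hF.
- move=> b b' F F' f [Bb _] [Bb' _] _ hY hY'.
  exists (pair_transition b b'); split.
    split; first exact: Gsigma_pair_transition.
    split; first by rewrite pair_transitionK.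
    by apply: push_g_pair_transition => // Y PY; rewrite hY ?hY'.
  by move=> g' [Gg' [eb _]]; exact: pair_transition_unique eb.
Qed.
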